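(* Consider a HyperLogLog sketch with $m$ registers after inserting $n$ distinct elements (model and convention in the context), and let $B=\log_2\frac{n}{m}$. Then for every $\Delta\in(0,B)$ and every $j\in[m]$: (i) $\Pr[M[j]<B-\Delta]<\exp(-2^\Delta)<2^{-\Delta}$, and (ii) $\Pr[M[j]>B+\Delta]<2^{-\Delta}$.
   Context: HyperLogLog model: each of $n$ distinct elements $y_i$ is assigned a register index $f(y_i)$ uniform in $[m]$ and a value $\rho_i$ with $\Pr[\rho_i=k]=2^{-k}$, $k=1,2,\dots$ (the position of the first one-bit of a uniformly random hash value), all independent; register $M[j]$ is the maximum of $\rho_i$ over elements with $f(y_i)=j$ (0 if none). Then $\Pr[M[j]\le k]=(1-\frac{1}{m2^k})^n$ for integers $k\ge0$. Convention for this statement: each register $M[j]$ is treated as a real-valued continuous random variable with distribution function $\Pr[M[j]\le t]=\Pr[M[j]<t]=(1-\frac{1}{m2^t})^n$ for real $t$, and $\Pr[M[j]>t]=1-(1-\frac{1}{m2^t})^n$. *)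

From Stdlib Require Import Reals.
Open Scope R_scope.

Definition pow2R (t : R) : R := Rpower 2 t.
Definition log2R (x : R) : R := ln x / ln 2.

(* Following the
   stated convention, register M[j] (j < m) is treated as a continuous real
   random variable with distribution function
     Pr[M[j] <= t] = Pr[M[j] < t] = (1 - 1/(m 2^t))^n,
     Pr[M[j] > t]  = 1 - (1 - 1/(m 2^t))^n.
   The distribution does not depend on j (registers are identically
   distributed); j is kept as an argument to mirror the statement. *)
Definition hll_cdf (m n : nat) (t : R) : R :=
  (1 - 1 / (INR m * pow2R t)) ^ n.

Definition Pr_reg_lt (m n : nat) (j : nat) (t : R) : R := hll_cdf m n t.
Definition Pr_reg_le (m n : nat) (j : nat) (t : R) : R := hll_cdf m n t.
Definition Pr_reg_gt (m n : nat) (j : nat) (t : R) : R := 1 - hll_cdf m n t.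

(** With [B = log2 (n/m)] the cdf of a register at [B + t] is exactly
    [(1 - 2^-t / n)^n].  Below the mean ([t = -Delta]) this is at most
    [exp (-2^Delta)] by [1 - x < exp (-x)], and [exp (-c) < 1/c].  Above the
    mean ([t = Delta]) Bernoulli's inequality bounds [1 - (1 - a/n)^n] by
    [a = 2^-Delta]. *)
From Stdlib Require Import Reals Lra Lia.
Open Scope R_scope.

Lemma pow_lt_compat_l (x y : R) (n : nat) :
  0 <= x < y -> (1 <= n)%nat -> x ^ n < y ^ n.
Proof.
  intros Hxy Hn; induction n as [|n IH]; [lia|].
  destruct n as [|n]; [simpl; lra|].
  assert (IHn : x ^ S n < y ^ S n) by (apply IH; lia).
  assert (0 <= x ^ S n) by (apply pow_le; lra).
  simpl in *; nra.
Qed.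

Lemma bernoulli (u : R) (n : nat) : 0 <= u <= 1 -> 1 - INR n * u <= (1 - u) ^ n.
Proof.
  intros Hu; induction n as [|n IH]; [simpl; lra|].
  rewrite S_INR; simpl.
  assert ((1 - INR n * u) * (1 - u) <= (1 - u) ^ n * (1 - u))
    by (apply Rmult_le_compat_r; lra).
  assert (0 <= INR n) by apply pos_INR.
  nra.
Qed.

Lemma bernoulli_strict (u : R) (n : nat) :
  0 < u <= 1 -> (2 <= n)%nat -> 1 - INR n * u < (1 - u) ^ n.
Proof.
  intros Hu Hn; destruct n as [|n]; [lia|].
  rewrite S_INR; simpl.
  assert ((1 - INR n * u) * (1 - u) <= (1 - u) ^ n * (1 - u))
    by (apply Rmult_le_compat_r; [lra | apply bernoulli; lra]).
  assert (1 <= INR n) by (apply (le_INR 1); lia).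
  nra.
Qed.

Lemma exp_pow (x : R) (n : nat) : exp x ^ n = exp (INR n * x).
Proof.
  rewrite <- Rpower_pow by apply exp_pos.
  unfold Rpower; rewrite ln_exp; reflexivity.
Qed.

Lemma one_sub_lt_exp_opp (x : R) : x <> 0 -> 1 - x < exp (- x).
Proof. intros Hx; pose proof (exp_ineq1 (- x)); lra. Qed.

Lemma exp_opp_lt_inv (c : R) : 0 < c -> exp (- c) < / c.
Proof.
  intros Hc; rewrite exp_Ropp.
  apply Rinv_lt_contravar; [apply Rmult_lt_0_compat; [lra | apply exp_pos]|].
  pose proof (exp_ineq1_le c); lra.
Qed.

Lemma lower_tail_lt (n : nat) (c : R) :
  0 < c <= INR n -> (1 - c / INR n) ^ n < exp (- c).
Proof.
  intros Hc.
  assert (HnR : 0 < INR n) by lra.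
  assert (Hn : (1 <= n)%nat) by (apply (INR_lt 0); simpl; lra).
  assert (Hx : 0 < c / INR n <= 1).
  { split; [apply Rdiv_lt_0_compat; lra|].
    apply Rmult_le_reg_r with (INR n); [lra|]; field_simplify; lra. }
  replace (exp (- c)) with (exp (- (c / INR n)) ^ n)
    by (rewrite exp_pow; f_equal; field; lra).
  apply pow_lt_compat_l; [|exact Hn].
  split; [lra | apply one_sub_lt_exp_opp; lra].
Qed.

Lemma upper_tail_lt (n : nat) (a : R) :
  (2 <= n)%nat -> 0 < a <= 1 -> 1 - (1 - a / INR n) ^ n < a.
Proof.
  intros Hn Ha.
  assert (HnR : 2 <= INR n) by (apply (le_INR 2); exact Hn).
  assert (Hu : 0 < a / INR n <= 1).
  { split; [apply Rdiv_lt_0_compat; lra|].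
    apply Rmult_le_reg_r with (INR n); [lra|]; field_simplify; lra. }
  pose proof (bernoulli_strict (a / INR n) n Hu Hn) as Hb.
  replace (INR n * (a / INR n)) with a in Hb by (field; lra).
  lra.
Qed.

Lemma pow2R_gt1 (t : R) : 0 < t -> 1 < pow2R t.
Proof.
  intros Ht; rewrite <- (Rpower_O 2) by lra.
  apply Rpower_lt; lra.
Qed.

Lemma pow2R_log2R (x : R) : 0 < x -> pow2R (log2R x) = x.
Proof. intros Hx; apply Rpower_Rlog; lra. Qed.

(* Relies on the junk value [ln x = 0] for [x <= 0]. *)
Lemma pos_of_log2R_pos (x : R) : 0 < log2R x -> 0 < x.
Proof.
  unfold log2R, ln; destruct (Rlt_dec 0 x) as [Hx|_]; [easy|].
  unfold Rdiv; rewrite Rmult_0_l; lra.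
Qed.

Section Register.

Variables (m n : nat).
Hypothesis m_gt0 : (0 < m)%nat.

Let B := log2R (INR n / INR m).

Lemma hll_cdf_shift (t : R) :
  (0 < n)%nat -> hll_cdf m n (B + t) = (1 - pow2R (- t) / INR n) ^ n.
Proof.
  intros Hn.
  assert (HmR : 0 < INR m) by (apply lt_0_INR; exact m_gt0).
  assert (HnR : 0 < INR n) by (apply lt_0_INR; exact Hn).
  unfold hll_cdf, B, pow2R; rewrite Rpower_plus, Rpower_Ropp.
  fold (pow2R (log2R (INR n / INR m))).
  rewrite pow2R_log2R by (apply Rdiv_lt_0_compat; lra).
  assert (0 < Rpower 2 t) by apply exp_pos.
  f_equal; f_equal; field; lra.
Qed.

Lemma below_log2_ratio (t : R) :
  0 < t < B -> INR m * pow2R t < INR n.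
Proof.
  intros Ht.
  assert (HmR : 0 < INR m) by (apply lt_0_INR; exact m_gt0).
  assert (Hq : 0 < INR n / INR m) by (apply pos_of_log2R_pos; fold B; lra).
  assert (Hlt : pow2R t < INR n / INR m).
  { rewrite <- (pow2R_log2R (INR n / INR m)) by exact Hq.
    apply Rpower_lt; [lra | fold B; lra]. }
  apply Rmult_lt_compat_l with (r := INR m) in Hlt; [|exact HmR].
  replace (INR m * (INR n / INR m)) with (INR n) in Hlt by (field; lra).
  exact Hlt.
Qed.

End Register.

Theorem lemma3p3 (m n : nat) (j : nat) (Delta : R) :
  (0 < m)%nat -> (j < m)%nat ->
  let B := log2R (INR n / INR m) in
  0 < Delta -> Delta < B ->
  (Pr_reg_lt m n j (B - Delta) < exp (- pow2R Delta) /\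
   exp (- pow2R Delta) < pow2R (- Delta)) /\
  Pr_reg_gt m n j (B + Delta) < pow2R (- Delta).
Proof.
  intros Hm _ B HD HDB.
  assert (He : 1 < pow2R Delta) by (apply pow2R_gt1; exact HD).
  assert (HmR : 1 <= INR m) by (apply (le_INR 1); exact Hm).
  assert (Hmn : INR m * pow2R Delta < INR n)
    by (apply below_log2_ratio; [exact Hm | split; [exact HD | exact HDB]]).
  assert (Hn : (2 <= n)%nat) by (apply INR_lt; simpl; nra).
  assert (Hinv : pow2R (- Delta) = / pow2R Delta) by apply Rpower_Ropp.
  unfold Pr_reg_lt, Pr_reg_gt.
  split; [split|].
  - replace (B - Delta) with (B + - Delta) by ring.
    rewrite (hll_cdf_shift m n Hm) by lia.
    rewrite Ropp_involutive.
    apply lower_tail_lt; nra.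
  - rewrite Hinv; apply exp_opp_lt_inv; lra.
  - rewrite (hll_cdf_shift m n Hm) by lia.
    apply upper_tail_lt; [exact Hn|].
    rewrite Hinv; split; [apply Rinv_0_lt_compat; lra|].
    rewrite <- Rinv_1; apply Rinv_le_contravar; lra.
Qed.
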